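(* The representativity metrics $\rho_1$ and $\rho_\infty$, viewed as set functions $\mathbf{S} \mapsto \rho_1(d)$ and $\mathbf{S}\mapsto\rho_\infty(d)$ on (nonempty) summaries $\mathbf{S}\subseteq\mathbf{W}$ for a fixed workload $\mathbf{W}$ and target distribution $d$, are in general neither monotone nor submodular: there exist a workload and target distribution for which each of $\rho_1$ and $\rho_\infty$ fails to be monotone and fails to be submodular.
   Context: A workload $\mathbf{W}$ is a finite multiset of queries; a summary is $\mathbf{S}\subseteq\mathbf{W}$. There is a finite set $\mathbf{F}$ of features; for each query $q$ and feature $f$, $f(q)$ is a finite multiset of tokens. $f(\mathbf{S}) = \biguplus_{q\in\mathbf{S}} f(q)$, $\mathrm{dom}(\mathbf{S},f)$ is the set of distinct tokens in $f(\mathbf{S})$, $m_{\mathbf{S}}(t,f)$ the multiplicity of $t$ in $f(\mathbf{S})$, $\|\mathbf{S}\| = \sum_{q\in\mathbf{S}}\sum_f|f(q)|$, and $p_{\mathbf{S}}(t) = m_{\mathbf{S}}(t,f)/\|\mathbf{S}\|$ (tokens of distinct features regarded as distinct). For a target distribution $d$ on tokens of $\mathbf{W}$: $\rho_1(d) = 1 - \frac12\sum_f\sum_{t\in\mathrm{dom}(\mathbf{W},f)}|p_{\mathbf{S}}(t)-d(t)|$, $\rho_\infty(d) = 1-\max_f\max_{t\in\mathrm{dom}(\mathbf{W},f)}|p_{\mathbf{S}}(t)-d(t)|$. A set function $g$ is monotone if $A\subseteq B$ implies $g(A)\le g(B)$, and submodular if $g(A)+g(B)\ge g(A\cup B)+g(A\cap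 B)$. *)

From mathcomp Require Import all_boot all_order all_algebra.
Set Implicit Arguments. Unset Strict Implicit. Unset Printing Implicit Defensive.
Import Order.TTheory GRing.Theory Num.Theory.
Local Open Scope ring_scope.

(* A workload W is a finite multiset of queries: its elements are indexed by a
   finType Q (two copies of the same query are distinct elements of Q), and
   W is the whole of Q.  Features form a
   finType Fe; tokens range over a finType Tok; f(q) is the finite multiset of
   tokens [tok q f] (a sequence, considered up to permutation: only
   multiplicities and sizes are used).  Tokens of distinct features are
   regarded as distinct, so all quantities are indexed by pairs (f, t). *)

Section Repr.
Variables (R : realFieldType) (Q Fe Tok : finType).
Variable tok : Q -> Fe -> seq Tok.

Definition mult (S : {set Q}) (f : Fe) (t : Tok) : nat :=
  (\sum_(q in S) count_mem t (tok q f))%N.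

Definition wsize (S : {set Q}) : nat :=
  (\sum_(q in S) \sum_(f : Fe) size (tok q f))%N.

Definition indom (S : {set Q}) (f : Fe) (t : Tok) : bool := (0 < mult S f t)%N.

Definition prob (S : {set Q}) (f : Fe) (t : Tok) : R :=
  (mult S f t)%:R / (wsize S)%:R.

Definition is_target_distr (d : Fe -> Tok -> R) : Prop :=
  (forall f t, 0 <= d f t) /\
  (forall f t, ~~ indom [set: Q] f t -> d f t = 0) /\
  \sum_(f : Fe) \sum_(t | indom [set: Q] f t) d f t = 1.

Definition rho1 (d : Fe -> Tok -> R) (S : {set Q}) : R :=
  1 - 2^-1 * \sum_(f : Fe) \sum_(t | indom [set: Q] f t) `|prob S f t - d f t|.

Definition rhoinf (d : Fe -> Tok -> R) (S : {set Q}) : R :=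
  1 - \big[Num.max/0]_(f : Fe) \big[Num.max/0]_(t | indom [set: Q] f t)
        `|prob S f t - d f t|.
End Repr.

Definition monotone_ne (Q : finType) (R : realFieldType) (g : {set Q} -> R) : Prop :=
  forall A B : {set Q}, A != set0 -> A \subset B -> g A <= g B.

Definition submodular_ne (Q : finType) (R : realFieldType) (g : {set Q} -> R) : Prop :=
  forall A B : {set Q}, A :&: B != set0 ->
    g (A :|: B) + g (A :&: B) <= g A + g B.

From mathcomp Require Import all_boot all_order all_algebra.
From mathcomp Require Import ring lra.
Set Implicit Arguments. Unset Strict Implicit. Unset Printing Implicit Defensive.
Import Order.TTheory GRing.Theory Num.Theory.
Local Open Scope ring_scope.

(* Label four queries 0..3 by parity: each contributes one token, its parity,
   to a single feature, and the target is uniform on the two tokens.  The two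
   deviations |p_S(t) - 1/2| are then equal, so rho_1 and rho_oo both reduce to
   the balance 1 - |p_S(even) - 1/2| of S.  Balance is not monotone ({0,1} is
   balanced, {0,1,2} is not) and not submodular ({0,2} and {0,1,3} are
   unbalanced, while their union is balanced and their intersection {0} is
   no worse than {0,2}). *)

Lemma big_unit (T : Type) (idx : T) (op : T -> T -> T) (F : unit -> T) :
  \big[op/idx]_(f : unit) F f = op (F tt) idx.
Proof. by rewrite unlock /= /index_enum /= unlock. Qed.

Lemma big_bool_idx (T : Type) (idx : T) (op : T -> T -> T) (F : bool -> T) :
  \big[op/idx]_(t : bool) F t = op (F true) (op (F false) idx).
Proof. by rewrite unlock /= /index_enum /= unlock. Qed.

Section SingleTokenQueries.
Variables (R : realFieldType) (Q : finType) (b : Q -> bool).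

Definition bit_tok (q : Q) (f : unit) : seq bool := [:: b q].

Definition half_target (f : unit) (t : bool) : R := 2^-1.

Lemma mult_bit_tok S t : mult bit_tok S tt t = (\sum_(q in S) (b q == t))%N.
Proof. by apply: eq_bigr => q _; rewrite /= addn0. Qed.

Lemma wsize_bit_tok S : wsize bit_tok S = (\sum_(q in S) 1)%N.
Proof. by apply: eq_bigr => q _; rewrite big_unit. Qed.

Lemma mult_bit_tokTF S :
  (mult bit_tok S tt true + mult bit_tok S tt false)%N = wsize bit_tok S.
Proof.
rewrite !mult_bit_tok wsize_bit_tok -big_split.
by apply: eq_bigr => q _; case: (b q).
Qed.

Lemma prob_bit_tokF_dev S :
  `|prob R bit_tok S tt false - 2^-1| = `|prob R bit_tok S tt true - 2^-1| :> R.
Proof.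
rewrite /prob; have := mult_bit_tokTF S.
(* For the empty summary both probabilities are the junk value x / 0 = 0. *)
have [-> _ | w_neq0 <-] := eqVneq (wsize bit_tok S) 0%N.
  by rewrite invr0 !mulr0.
have w_gt0 : 0 < (mult bit_tok S tt true + mult bit_tok S tt false)%:R :> R.
  by rewrite ltr0n lt0n mult_bit_tokTF.
rewrite -[RHS]normrN natrD; congr `|_|; field; lra.
Qed.

Hypotheses (b_true : exists q, b q) (b_false : exists q, ~~ b q).

Lemma indom_bit_tok t : indom bit_tok [set: Q] tt t.
Proof.
have [q bq] : exists q, b q == t.
  by case: t; [case: b_true | case: b_false] => q bq; exists q; case: (b q) bq.
by rewrite /indom mult_bit_tok (bigD1 q) //= bq.
Qed.

Lemma rho1_bit_tok S :
  rho1 bit_tok half_target S = 1 - `|prob R bit_tok S tt true - 2^-1|.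
Proof.
rewrite /rho1 big_unit addr0.
under eq_bigl do rewrite indom_bit_tok.
rewrite big_bool_idx prob_bit_tokF_dev /half_target; lra.
Qed.

Lemma rhoinf_bit_tok S :
  rhoinf bit_tok half_target S = 1 - `|prob R bit_tok S tt true - 2^-1|.
Proof.
rewrite /rhoinf big_unit.
under eq_bigl do rewrite indom_bit_tok.
rewrite big_bool_idx prob_bit_tokF_dev /half_target.
by rewrite (max_idPl (normr_ge0 _)) maxxx (max_idPl (normr_ge0 _)).
Qed.

Lemma half_target_distr : is_target_distr bit_tok half_target.
Proof.
split; first by move=> f t; rewrite invr_ge0 ler0n.
split; first by move=> [] t; rewrite indom_bit_tok.
rewrite big_unit addr0; under eq_bigl do rewrite indom_bit_tok.
rewrite big_bool_idx /half_target; lra.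
Qed.

End SingleTokenQueries.

Definition parity_tok : 'I_4 -> unit -> seq bool :=
  bit_tok (fun q : 'I_4 => ~~ odd q).

Definition ord4_set (s : seq nat) : {set 'I_4} := [set q | val q \in s].

Section ParityWorkload.
Variable R : realFieldType.

Definition parity_balance (S : {set 'I_4}) : R :=
  1 - `|prob R parity_tok S tt true - 2^-1|.

Lemma prob_parity_tok S :
  prob R parity_tok S tt true =
  (\sum_q ((q \in S) && ~~ odd q))%N%:R / (\sum_q (q \in S))%N%:R.
Proof.
rewrite /prob mult_bit_tok wsize_bit_tok.
rewrite [in X in X%:R / _]big_mkcond [in X in _ / X%:R]big_mkcond.
by congr (_%:R / _%:R); apply: eq_bigr => q _; case: (q \in S); rewrite ?eqb_id.
Qed.

Lemma ord4_setS (s1 s2 : seq nat) :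
  {subset s1 <= s2} -> ord4_set s1 \subset ord4_set s2.
Proof. by move=> s12; apply/subsetP => q; rewrite !inE; apply: s12. Qed.

Ltac eval_parity_balance :=
  rewrite /parity_balance !prob_parity_tok !big_ord_recr !big_ord0 /= !inE /=;
  rewrite !(add0n, addn0, addn1);
  repeat first [rewrite ger0_norm; last by lra | rewrite ler0_norm; last by lra].

Lemma parity_balance_not_monotone (g : {set 'I_4} -> R) :
  g =1 parity_balance -> ~ monotone_ne g.
Proof.
move=> gE /(_ (ord4_set [:: 0; 1]) (ord4_set [:: 0; 1; 2]))%N.
have A_neq0 : ord4_set [:: 0; 1]%N != set0.
  by apply/set0Pn; exists ord0; rewrite inE.
have AB : ord4_set [:: 0; 1]%N \subset ord4_set [:: 0; 1; 2]%N.
  by apply: ord4_setS; apply/allP.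
move=> /(_ A_neq0 AB); rewrite !gE; eval_parity_balance; lra.
Qed.

Lemma parity_balance_not_submodular (g : {set 'I_4} -> R) :
  g =1 parity_balance -> ~ submodular_ne g.
Proof.
move=> gE /(_ (ord4_set [:: 0; 2]) (ord4_set [:: 0; 1; 3]))%N.
have AB_neq0 : ord4_set [:: 0; 2]%N :&: ord4_set [:: 0; 1; 3]%N != set0.
  by apply/set0Pn; exists ord0; rewrite !inE.
move=> /(_ AB_neq0); rewrite !gE; eval_parity_balance; lra.
Qed.

End ParityWorkload.

Theorem lemma4p3 (R : realFieldType) :
  exists (Q Fe Tok : finType) (tok : Q -> Fe -> seq Tok) (d : Fe -> Tok -> R),
    is_target_distr tok d /\
    ~ monotone_ne (rho1 tok d) /\ ~ submodular_ne (rho1 tok d) /\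
    ~ monotone_ne (rhoinf tok d) /\ ~ submodular_ne (rhoinf tok d).
Proof.
have even0 : exists q : 'I_4, ~~ odd q by exists ord0.
have odd1 : exists q : 'I_4, ~~ ~~ odd q by exists (inord 1); rewrite inordK.
have rho1E := rho1_bit_tok R even0 odd1.
have rhoinfE := rhoinf_bit_tok R even0 odd1.
exists 'I_4, unit, bool, parity_tok, (half_target R).
split; first exact: (half_target_distr R even0 odd1).
split; first exact: (parity_balance_not_monotone rho1E).
split; first exact: (parity_balance_not_submodular rho1E).
split; first exact: (parity_balance_not_monotone rhoinfE).
exact: (parity_balance_not_submodular rhoinfE).
Qed.
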